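(* The category $\mathcal{C}$ does not have duals for objects.
   Context: $\mathcal{C}$ is the monoidal category whose objects are finite ordered subsets of $\mathbb{N}$ (possibly with repetitions), with monoidal product union and unit $\emptyset$, whose morphisms are complex matrices with rows and columns labeled by the two objects (composition being matrix product along the common label set, monoidal product of morphisms being direct sum). A monoidal category has duals for objects if every object $A$ has a dual object $A^*$ together with evaluation $e_A:A\otimes A^*\to\mathds{1}$ and coevaluation $i_A:\mathds{1}\to A^*\otimes A$ morphisms satisfying the usual adjunction (zig-zag) identities. Here, via the functor $\operatorname{sDet}$ (which sends a matrix $X$ with row labels $R$, column labels $S$ to $\sum_{I\subseteq R,J\subseteq S}\det(X_{I,J})|I\rangle\langle J|$ on tensor products of copies of $\mathbb{C}^2$), the evaluation for a single wire would have to correspond to the vector $|00\rangle+|11\rangle$. *)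

From HB Require Import structures.
From mathcomp Require Import all_boot all_order all_algebra.
From mathcomp Require Import complex.
From mathcomp Require Import Rstruct.
Set Implicit Arguments. Unset Strict Implicit. Unset Printing Implicit Defensive.
Import Order.TTheory GRing.Theory Num.Theory.
Local Open Scope ring_scope.

Definition Cx : Type := complex Rdefinitions.R.

Definition Obj := seq nat.

(* A morphism A -> B is a complex matrix with rows labelled by B and
   columns labelled by A (so composition g o f is the matrix product g *m f). *)
Definition Hom (A B : Obj) := 'M[Cx]_(size B, size A).

Definition comp (A B D : Obj) (g : Hom B D) (f : Hom A B) : Hom A D := g *m f.
Definition idm (A : Obj) : Hom A A := 1%:M.

Definition tens (A B : Obj) : Obj := A ++ B.
Definition unitO : Obj := [::].

Definition tensM (A A' B B' : Obj) (f : Hom A B) (g : Hom A' B')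
  : Hom (tens A A') (tens B B') :=
  castmx (esym (size_cat B B'), esym (size_cat A A')) (block_mx f 0 0 g).

(* The structural isomorphisms (associators, unitors) are the identities on
   labels; since e.g. A ++ (B ++ D) and (A ++ B) ++ D are the same label list
   but not convertible as types, we realise them by the "identity-on-positions"
   matrix between two label lists of the same length. *)
Definition canon (A B : Obj) : Hom A B :=
  \matrix_(i < size B, j < size A) (((i : nat) == j)%:R : Cx).

Definition assoc (A B D : Obj) : Hom (tens (tens A B) D) (tens A (tens B D)) :=
  canon _ _.
Definition assoc_inv (A B D : Obj) : Hom (tens A (tens B D)) (tens (tens A B) D) :=
  canon _ _.
Definition lunit (A : Obj) : Hom (tens unitO A) A := canon _ _.
Definition lunit_inv (A : Obj) : Hom A (tens unitO A) := canon _ _.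
Definition runit (A : Obj) : Hom (tens A unitO) A := canon _ _.
Definition runit_inv (A : Obj) : Hom A (tens A unitO) := canon _ _.

Definition is_dual (A Ad : Obj) (e : Hom (tens A Ad) unitO)
  (i : Hom unitO (tens Ad A)) : Prop :=
  comp (lunit A)
    (comp (tensM e (idm A))
      (comp (assoc_inv A Ad A)
        (comp (tensM (idm A) i) (runit_inv A)))) = idm A
  /\
  comp (runit Ad)
    (comp (tensM (idm Ad) e)
      (comp (assoc Ad A Ad)
        (comp (tensM i (idm Ad)) (lunit_inv Ad)))) = idm Ad.

Definition has_duals : Prop :=
  forall A : Obj, exists (Ad : Obj) (e : Hom (tens A Ad) unitO)
    (i : Hom unitO (tens Ad A)), is_dual e i.

From Pilot Require Import Defs.
From mathcomp Require Import all_boot all_order all_algebra complex Rstruct.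
Import GRing.Theory.
Local Open Scope ring_scope.

Lemma tensM_lower_left {A A' B B' : Obj} (f : Defs.Hom A B) (g : Defs.Hom A' B')
    (k : 'I_(size (tens B B'))) (j : 'I_(size (tens A A'))) :
  (size B <= k)%N -> (j < size A)%N -> tensM f g k j = 0.
Proof.
move=> Bk jA; rewrite /tensM castmxE /= /block_mx !mxE.
case: splitP => [k' /= kE | k' _]; first by have := ltn_ord k'; rewrite -kE ltnNge Bk.
rewrite mxE; case: splitP => [j' _ | j' /= jE]; first by rewrite mxE.
by have := leq_addr j' (size A); rewrite -jE leqNgt jA.
Qed.

Lemma canonE (A B : Obj) (i : 'I_(size B)) (j : 'I_(size A)) :
  canon A B i j = ((i : nat) == j)%:R.
Proof. by rewrite mxE. Qed.

(* [e] has no rows and [i] no columns, so [tensM e 1] only sees the last copy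
   of [A] and [tensM 1 i] only feeds the first one: the composite vanishes. *)
Lemma zigzag_mid_eq0 (A Ad : Obj) (e : Defs.Hom (tens A Ad) unitO)
    (i : Defs.Hom unitO (tens Ad A)) :
  tensM e (idm A) *m (assoc_inv A Ad A *m tensM (idm A) i) = 0.
Proof.
apply/matrixP => a b; rewrite mulmxA !mxE; apply: big1 => l _.
have [Al | lA] := leqP (size A) l.
  rewrite (tensM_lower_left _ _ _ _ Al) ?mulr0 //.
  by apply: leq_trans (ltn_ord b) _; rewrite /tens cats0.
rewrite mxE big1 ?mul0r // => m _.
rewrite /assoc_inv canonE; have [ml | _] := eqVneq (m : nat) l; last by rewrite mulr0.
rewrite tensM_lower_left ?mul0r // ml.
by apply: leq_trans lA _; rewrite size_cat leq_addr.
Qed.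

Lemma no_dual_of_nonempty {A Ad : Obj} {e : Defs.Hom (tens A Ad) unitO}
    {i : Defs.Hom unitO (tens Ad A)} :
  A != [::] -> ~ is_dual e i.
Proof.
case: A e i => [// | x A] e i _ [zigzag _].
move: zigzag; rewrite /Defs.comp (mulmxA (assoc_inv _ _ _)).
rewrite (mulmxA (tensM e _)) zigzag_mid_eq0.
rewrite mul0mx mulmx0 => /matrixP /(_ ord0 ord0).
by rewrite /idm !mxE => /eqP; rewrite eq_sym oner_eq0.
Qed.

Theorem mainTheorem6 : ~ has_duals.
Proof.
move=> /(_ [:: 0%N]) [Ad [e [i dual]]].
exact: no_dual_of_nonempty _ dual.
Qed.
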